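(* Let $G=(V,E)$ be a finite simple undirected graph with zipper constraint collection $\mathcal{Z}$, let $D\subseteq Z^2$, and let $\mathbb{S}$ be a downstream-enabled prescription on $D$. Then the boundary inclusion $\bar{\mathbb{S}}$, regarded as a prescription on the domain $\bar D$, is downstream enabled.
   Context: A zipper constraint collection is a finite set $\mathcal{Z}=\{(U_1,W_1,y_1),\dots,(U_m,W_m,y_m)\}$, where each $U_i,W_i\in E$ is an edge of $G$ and each $y_i$ is a label. Let $Z^2=\{U_1,\dots,U_m,W_1,\dots,W_m\}$. Write $P\uparrow Q$ if $(P,Q,y)\in\mathcal{Z}$ for some $y$, and let $\rightsquigarrow$ be the transitive closure of $\uparrow$ on $Z^2$. A prescription on a domain $D\subseteq Z^2$ is a subset $\mathbb{S}\subseteq D$. It is downstream enabled if, whenever $P_a\in\mathbb{S}$ and $P_a\rightsquigarrow P_b$, we have $P_b\in\mathbb{S}$ or $P_b\notin D$. The boundary inclusion is defined as follows. Let $F^{\mathrm{off}}=\{P_a\in Z^2\setminus D:\exists P_b\in D\setminus\mathbb{S},\ P_a\rightsquigarrow P_b\}$ and $F^{\mathrm{on}}=\{P_c\in Z^2\setminus D:\exists P_d\in\mathbb{S},\ P_d\rightsquigarrow P_c\}$. Then $\bar D=D\cup F^{\mathrm{off}}\cup F^{\mathrm{on}}$ and $\bar{\mathbb{S}}=\mathbb{S}\cup F^{\mathrm{on}}$, which is a prescription on $\bar D$ whose off pairs are $\bar D\setminus\bar{\mathbb{S}}$. *)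

From mathcomp Require Import all_boot.
Set Implicit Arguments. Unset Strict Implicit. Unset Printing Implicit Defensive.

Section Zipper.
Variables (V : finType) (Y : eqType).

Definition simple_graph (e : rel V) : Prop := symmetric e /\ irreflexive e.

Definition edges (e : rel V) : {set {set V}} :=
  [set A : {set V} | [exists x, exists y, e x y && (A == [set x; y])]].

Definition zipper_collection (e : rel V) (Z : seq ({set V} * {set V} * Y)) : Prop :=
  forall t, t \in Z -> t.1.1 \in edges e /\ t.1.2 \in edges e.

Definition Z2 (Z : seq ({set V} * {set V} * Y)) : {set {set V}} :=
  [set P | has (fun t => (t.1.1 == P) || (t.1.2 == P)) Z].

Definition zup (Z : seq ({set V} * {set V} * Y)) : rel {set V} :=
  fun P Q => has (fun t => (t.1.1 == P) && (t.1.2 == Q)) Z.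

(* ⇝ : transitive (non-reflexive) closure of ↑ *)
Definition zreach (Z : seq ({set V} * {set V} * Y)) (P Q : {set V}) : bool :=
  [exists R, zup Z P R && connect (zup Z) R Q].

Definition prescription (Z : seq ({set V} * {set V} * Y)) (D S : {set {set V}}) : Prop :=
  D \subset Z2 Z /\ S \subset D.

Definition downstream_enabled (Z : seq ({set V} * {set V} * Y)) (D S : {set {set V}}) : Prop :=
  forall Pa Pb, Pa \in S -> zreach Z Pa Pb -> Pb \in S \/ Pb \notin D.

Definition F_off (Z : seq ({set V} * {set V} * Y)) (D S : {set {set V}}) : {set {set V}} :=
  [set Pa in Z2 Z :\: D | [exists Pb in D :\: S, zreach Z Pa Pb]].

Definition F_on (Z : seq ({set V} * {set V} * Y)) (D S : {set {set V}}) : {set {set V}} :=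
  [set Pc in Z2 Z :\: D | [exists Pd in S, zreach Z Pd Pc]].

Definition Dbar Z D S := D :|: F_off Z D S :|: F_on Z D S.
Definition Sbar Z D S := S :|: F_on Z D S.

End Zipper.

From mathcomp Require Import all_boot.

(* Everything reachable from S already lies in the boundary inclusion: a target
   of S is in S by downstream enabledness, or outside D and hence in F_on.  The
   pairs of F_on are themselves reachable from S, so by transitivity of the
   reachability relation the boundary inclusion is closed under it. *)

Section BoundaryInclusion.
Variables (V : finType) (Y : eqType) (Z : seq ({set V} * {set V} * Y)).

Lemma zup_in_Z2 {P Q} : zup Z P Q -> Q \in Z2 Z.
Proof.
case/hasP=> t tZ /andP[_ /eqP <-].
by rewrite inE; apply/hasP; exists t; rewrite // eqxx orbT.
Qed.

Lemma zreach_in_Z2 {P Q} : zreach Z P Q -> Q \in Z2 Z.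
Proof.
case/existsP=> R /andP[PR /connectP[p pathp ->]].
case/lastP: p pathp => [_|p R'] /=; first exact: zup_in_Z2 PR.
by rewrite rcons_path last_rcons => /andP[_]; apply: zup_in_Z2.
Qed.

Lemma zreach_trans {P Q W} : zreach Z P Q -> zreach Z Q W -> zreach Z P W.
Proof.
case/existsP=> R /andP[PR RQ] /existsP[R' /andP[QR' R'W]].
apply/existsP; exists R; rewrite PR /=.
exact: connect_trans RQ (connect_trans (connect1 QR') R'W).
Qed.

Variables D S : {set {set V}}.

Lemma F_off_sub : F_off Z D S \subset Z2 Z :\: D.
Proof. by rewrite /F_off setIdE subsetIl. Qed.

Lemma F_on_sub : F_on Z D S \subset Z2 Z :\: D.
Proof. by rewrite /F_on setIdE subsetIl. Qed.

Lemma mem_F_on P :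
  (P \in F_on Z D S) = [&& P \notin D, P \in Z2 Z & [exists Pd in S, zreach Z Pd P]].
Proof. by rewrite /F_on setIdE in_setI in_setD [in X in _ && X]in_set andbA. Qed.

Lemma prescription_bar :
  prescription Z D S -> prescription Z (Dbar Z D S) (Sbar Z D S).
Proof.
case=> DZ SD; split.
  rewrite !subUset DZ /=.
  by rewrite !(subset_trans _ (subsetDl (Z2 Z) D)) ?F_off_sub ?F_on_sub.
by rewrite setUSS // (subset_trans SD) ?subsetUl.
Qed.

Hypothesis S_enabled : downstream_enabled Z D S.

Lemma zreach_from_S_in_Sbar {Pd Pb} : Pd \in S -> zreach Z Pd Pb -> Pb \in Sbar Z D S.
Proof.
move=> Pd_S reach; rewrite in_setU mem_F_on.
case: (S_enabled _ _ Pd_S reach) => [-> // | Pb_notD].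
rewrite Pb_notD (zreach_in_Z2 reach) /=.
by apply/orP; right; apply/existsP; exists Pd; rewrite Pd_S.
Qed.

Lemma Sbar_zreach_closed {Pa Pb} :
  Pa \in Sbar Z D S -> zreach Z Pa Pb -> Pb \in Sbar Z D S.
Proof.
rewrite in_setU mem_F_on => /orP[Pa_S | /and3P[_ _ /existsP[Pd /andP[Pd_S reach_Pa]]]].
  exact: zreach_from_S_in_Sbar.
by move=> reach_Pb; apply: zreach_from_S_in_Sbar Pd_S (zreach_trans reach_Pa reach_Pb).
Qed.

Lemma downstream_enabled_bar : downstream_enabled Z (Dbar Z D S) (Sbar Z D S).
Proof. by move=> Pa Pb Pa_S reach; left; apply: Sbar_zreach_closed reach. Qed.

End BoundaryInclusion.

Theorem mainTheorem7 (V : finType) (Y : eqType) (e : rel V)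
    (Z : seq ({set V} * {set V} * Y)) (D S : {set {set V}}) :
  simple_graph e ->
  zipper_collection e Z ->
  prescription Z D S ->
  downstream_enabled Z D S ->
  prescription Z (Dbar Z D S) (Sbar Z D S) /\
  downstream_enabled Z (Dbar Z D S) (Sbar Z D S).
Proof.
move=> _ _ presc S_enabled.
by split; [exact: prescription_bar presc | exact: downstream_enabled_bar S_enabled].
Qed.
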